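(* Let $X$ be a topological space. Then $X$ is core-compact if and only if its symmetric pseudogroup $\mathscr{I}(X)$ is continuous.
   Context: The symmetric pseudogroup $\mathscr{I}(X)$ is the set of all homeomorphisms $f:U\to V$ between open subsets $U=\mathrm{dom}(f)$ and $V$ of $X$, with product: for $f:U\to V$ and $f_1:U_1\to V_1$, $f_1\cdot f : x\mapsto f_1(f(x))$ defined on $f^{-1}(V\cap U_1)$ with values in $f_1(V\cap U_1)$; it is an inverse semigroup with $f^*=f^{-1}$. Its intrinsic order is $f\leqslant g$ iff $f=g|_U$ for some open $U\subseteq\mathrm{dom}(g)$. In a poset, $x$ is way-below $y$ ($x\ll y$) if for every directed subset $D$ (nonempty, any two elements having an upper bound in $D$) that has a supremum with $y\leqslant\sup D$, there is $d\in D$ with $x\leqslant d$. A poset is continuous if for every $s$ the set $\{t: t\ll s\}$ is directed with supremum $s$; $\mathscr{I}(X)$ is continuous if it is so for its intrinsic order. $X$ is core-compact if the collection of closed subsets of $X$, ordered by reverse inclusion $\supseteq$, is a continuous poset. *)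

From mathcomp Require Import all_boot all_order.
From mathcomp Require Import all_classical topology.
Set Implicit Arguments. Unset Strict Implicit. Unset Printing Implicit Defensive.
Local Open Scope classical_set_scope.

Section PosetNotions.
Variables (T : Type) (le : T -> T -> Prop).

Definition directed (D : set T) : Prop :=
  (exists d, D d) /\
  (forall a b, D a -> D b -> exists c, D c /\ le a c /\ le b c).

Definition is_sup (D : set T) (s : T) : Prop :=
  (forall d, D d -> le d s) /\ (forall u, (forall d, D d -> le d u) -> le s u).

Definition way_below (x y : T) : Prop :=
  forall D s, directed D -> is_sup D s -> le y s -> exists d, D d /\ le x d.

Definition continuous_poset : Prop :=
  forall s, directed (fun t => way_below t s) /\ is_sup (fun t => way_below t s) s.
End PosetNotions.

Section Pseudogroup.
Variable X : topologicalType.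

Record closed_set := ClosedSet { cs_set :> set X; cs_closed : closed cs_set }.

Definition closed_le (A B : closed_set) : Prop := (B : set X) `<=` A.

Definition core_compact : Prop := continuous_poset closed_le.

(* ---------- the symmetric pseudogroup I(X) ----------
   A homeomorphism f : U -> V between open subsets U, V of X is encoded
   by its graph, as a partial map X -> option X with domain U. *)
Definition pdom (f : X -> option X) : set X := [set x | f x <> None].
Definition pran (f : X -> option X) : set X := [set y | exists x, f x = Some y].
Definition ppre (f : X -> option X) (W : set X) : set X :=
  [set x | exists y, f x = Some y /\ W y].
Definition pimg (f : X -> option X) (W : set X) : set X :=
  [set y | exists x, f x = Some y /\ W x].

(* f : dom f -> ran f is a homeomorphism between open subsets of X:
   domain and range are open, f is injective (hence bijective onto its
   range), f is continuous (preimages of open sets are open; since dom f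
   is open this is continuity for the subspace topologies), and f^{-1} is
   continuous (images of open sets are open). *)
Definition is_phomeo (f : X -> option X) : Prop :=
  [/\ open (pdom f), open (pran f),
      (forall x1 x2 y, f x1 = Some y -> f x2 = Some y -> x1 = x2),
      (forall W, open W -> open (ppre f W)) &
      (forall W, open W -> open (pimg f W))].

Record pI := PI { pfun :> X -> option X; pfunP : is_phomeo pfun }.

Definition pI_le (f g : pI) : Prop :=
  exists U : set X, [/\ open U, U `<=` pdom g &
    forall x, (U x -> f x = g x) /\ (~ U x -> f x = None)].

Definition pI_continuous : Prop := continuous_poset pI_le.
End Pseudogroup.

(* Both sides reduce to pointwise approximation: every x outside a closed
   set B lies outside some A << B, resp. every x in the domain of s lies in
   the domain of some f << s.  These two conditions are exchanged through
   the open set X \ B = dom s: if A << B then s|_(X \ A) << s, and if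
   f << s then X \ dom f << B.  Directed families are transported by the
   monotone maps f |-> X \ dom f and C |-> s|_(X \ C); suprema match because
   a supremum of closed sets is their intersection, while the domain of a
   supremum in I(X) lies in the union of the domains. *)
From mathcomp Require Import all_boot all_order.
From mathcomp Require Import all_classical topology.
Set Implicit Arguments. Unset Strict Implicit. Unset Printing Implicit Defensive.
Local Open Scope classical_set_scope.

Section WayBelow.
Variables (T : Type) (le : T -> T -> Prop).
Hypothesis le_refl : forall x, le x x.
Hypothesis le_trans : forall x y z, le x y -> le y z -> le x z.

Lemma way_below_le x y : way_below le x y -> le x y.
Proof.
move=> xy.
have dirD : directed le [set y] by split=> [|a b -> ->]; exists y.
have supD : is_sup le [set y] y by split=> [d ->|u /(_ y erefl)].
by have [d [-> //]] := xy _ _ dirD supD (le_refl y).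
Qed.

Lemma way_below_least b y : (forall z, le b z) -> way_below le b y.
Proof. by move=> b_least D s [[d Dd] _] _ _; exists d. Qed.

Lemma way_below_join x1 x2 z y :
  way_below le x1 y -> way_below le x2 y ->
  (forall c, le x1 c -> le x2 c -> le z c) -> way_below le z y.
Proof.
move=> x1y x2y z_join D s dirD supD ys.
have [d1 [Dd1 x1d1]] := x1y D s dirD supD ys.
have [d2 [Dd2 x2d2]] := x2y D s dirD supD ys.
have [c [Dc [d1c d2c]]] := dirD.2 d1 d2 Dd1 Dd2.
exists c; split=> //.
by apply: z_join; [apply: le_trans x1d1 d1c | apply: le_trans x2d2 d2c].
Qed.

Lemma directed_image (T' : Type) (le' : T' -> T' -> Prop) (f : T -> T')
    (D : set T) :
  (forall a b, le a b -> le' (f a) (f b)) ->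
  directed le D -> directed le' (f @` D).
Proof.
move=> f_homo [[d Dd] dirD]; split; first by exists (f d), d.
move=> _ _ [a Da <-] [b Db <-]; have [c [Dc [ac bc]]] := dirD a b Da Db.
by exists (f c); split; [exists c | split; apply: f_homo].
Qed.

End WayBelow.

Section ClosedSets.
Variable X : topologicalType.

Definition bigcap_closed (D : set (closed_set X)) : closed_set X :=
  ClosedSet (@closed_bigI _ _ D (@cs_set X) (fun A _ => @cs_closed X A)).

Lemma is_sup_bigcap D : is_sup (@closed_le X) D (bigcap_closed D).
Proof. by split=> [A DA z Dz|u ub z uz A DA]; [apply: Dz | apply: ub]. Qed.

Lemma is_sup_closedE D (S : closed_set X) :
  is_sup (@closed_le X) D S -> (S : set X) = \bigcap_(A in D) A.
Proof.
move=> [ubS leastS]; apply/seteqP; split=> [z Sz A DA|]; first exact: ubS.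
exact: leastS (is_sup_bigcap D).1.
Qed.

Definition way_below_separates : Prop :=
  forall (B : closed_set X) x, ~ cs_set B x ->
  exists2 A, way_below (@closed_le X) A B & ~ cs_set A x.

Lemma core_compactP : core_compact X <-> way_below_separates.
Proof.
split=> [cc B x nBx | sep B].
  have : (~` \bigcap_(A in way_below (@closed_le X) ^~ B) cs_set A) x.
    by rewrite -(is_sup_closedE (cc B).2).
  by rewrite setC_bigcap => -[A AB nAx]; exists A.
split; first split.
- by exists (ClosedSet (@closedT X)); apply: way_below_least => A z.
- move=> A1 A2 A1B A2B.
  exists (ClosedSet (closedI (@cs_closed X A1) (@cs_closed X A2))).
  split; last by split=> z [].
  apply: way_below_join A1B A2B _ => [? ? ? AB BC|C A1C A2C z Cz].
    exact: subset_trans BC AB.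
  by split; [apply: A1C | apply: A2C].
- split=> [A | u ub z uz].
    exact: (@way_below_le _ (@closed_le X) (fun C => @subset_refl X C)).
  apply: contrapT => nBz; have [A AB nAz] := sep B z nBz.
  exact: nAz (ub A AB z uz).
Qed.

End ClosedSets.

Section PartialHomeomorphisms.
Variable X : topologicalType.
Implicit Types (f g s t : pI X) (U : set X).

Lemma pdom_open f : open (pdom f).
Proof. by case: (pfunP f). Qed.

Lemma pI_leP f g : pI_le f g <-> forall x y, f x = Some y -> g x = Some y.
Proof.
split=> [[U [_ _ fgU]] x y fx | fg].
  by have [/(fgU x).1 <- //|/(fgU x).2 fxN] := pselect (U x); rewrite fxN in fx.
exists (pdom f); split; first exact: pdom_open.
  by rewrite /pdom => x /=; case fx: (f x) => [y|] // _; rewrite (fg _ _ fx).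
move=> x; rewrite /pdom /=; case fx: (f x) => [y|]; last by split=> // [[]].
by split=> [_|nfx]; [rewrite (fg _ _ fx) | exfalso; exact: nfx].
Qed.

Lemma pI_le_refl f : pI_le f f.
Proof. exact/pI_leP. Qed.

Lemma pI_le_trans f g t : pI_le f g -> pI_le g t -> pI_le f t.
Proof. by move=> /pI_leP fg /pI_leP gt; apply/pI_leP => x y /fg /gt. Qed.

Lemma pI_le_pdom f g : pI_le f g -> pdom f `<=` pdom g.
Proof.
move/pI_leP=> fg x; rewrite /pdom /=.
by case fx: (f x) => [y|] // _; rewrite (fg _ _ fx).
Qed.

Lemma pI_le_agree f g t x y :
  pI_le f t -> pI_le g t -> f x = Some y -> pdom g x -> g x = Some y.
Proof.
move=> /pI_leP ft /pI_leP gt fx; rewrite /pdom /=; case gx: (g x) => [y'|] // _.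
by have := ft _ _ fx; rewrite (gt _ _ gx).
Qed.

Definition restr_fun s U : X -> option X :=
  fun x => if `[< U x >] then s x else None.

Lemma restr_funE s U x y : restr_fun s U x = Some y <-> U x /\ s x = Some y.
Proof. by rewrite /restr_fun; case: (asboolP (U x)) => Ux; split=> // [[]]. Qed.

Lemma restr_fun_phomeo s U : open U -> is_phomeo (restr_fun s U).
Proof.
move=> oU; have [_ _ s_inj s_pre s_img] := pfunP s.
have pdomE : pdom (restr_fun s U) = U `&` pdom s.
  apply/seteqP; split=> x; rewrite /pdom /restr_fun /=;
    by case: (asboolP (U x)) => // Ux [].
have pimgE W : pimg (restr_fun s U) W = pimg s (U `&` W).
  apply/seteqP; split=> y /= [x].
    by move=> [/restr_funE [Ux sx] Wx]; exists x.
  by move=> [sx [Ux Wx]]; exists x; split=> //; apply/restr_funE.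
have pranE : pran (restr_fun s U) = pimg s U.
  apply/seteqP; split=> y /= [x]; first by move/restr_funE=> [Ux sx]; exists x.
  by move=> [sx Ux]; exists x; apply/restr_funE.
have ppreE W : ppre (restr_fun s U) W = U `&` ppre s W.
  apply/seteqP; split=> x /=.
    by move=> [y [/restr_funE [Ux sx] Wy]]; split=> //; exists y.
  by move=> [Ux [y [sx Wy]]]; exists y; split=> //; apply/restr_funE.
split=> [||x1 x2 y /restr_funE [_ s1] /restr_funE [_ s2]|W oW|W oW].
- by rewrite pdomE; apply: openI => //; apply: pdom_open.
- by rewrite pranE; apply: s_img.
- exact: s_inj s1 s2.
- by rewrite ppreE; apply: openI => //; apply: s_pre.
- by rewrite pimgE; apply: s_img; apply: openI.
Qed.

Definition restr s U (oU : open U) : pI X := PI (restr_fun_phomeo s oU).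

Lemma restrE s U (oU : open U) x y :
  restr s oU x = Some y <-> U x /\ s x = Some y.
Proof. exact: restr_funE. Qed.

Lemma pdom_restr s U (oU : open U) x :
  pdom (restr s oU) x <-> U x /\ pdom s x.
Proof.
by rewrite /pdom /= /restr_fun; case: (asboolP (U x)) => Ux; split=> // [[]].
Qed.

Lemma restr_le_restr s U V (oU : open U) (oV : open V) :
  U `<=` V -> pI_le (restr s oU) (restr s oV).
Proof. by move=> UV; apply/pI_leP => x y /restrE [/UV Vx sx]; apply/restrE. Qed.

Lemma pI_le_restr f s U (oU : open U) :
  pI_le f s -> pdom f `<=` U -> pI_le f (restr s oU).
Proof.
move=> /pI_leP fs fU; apply/pI_leP => x y fx.
apply/restrE; split; last exact: fs.
by apply: fU; rewrite /pdom /= fx.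
Qed.

Lemma is_sup_pdom D t :
  is_sup (@pI_le X) D t -> pdom t `<=` \bigcup_(d in D) pdom d.
Proof.
move=> [ubt leastt]; have oU := bigcup_open (fun d (_ : D d) => pdom_open d).
have /pI_le_pdom tU : pI_le t (restr t oU).
  by apply: leastt => d Dd; apply: pI_le_restr (ubt d Dd) _ => x dx; exists d.
by move=> x /tU /pdom_restr [].
Qed.

Lemma id_phomeo : is_phomeo (@Some X).
Proof.
have ppreE W : ppre (@Some X) W = W.
  by apply/seteqP; split=> [x [_ [[<-]]] | x Wx] //; exists x.
have pimgE W : pimg (@Some X) W = W.
  by apply/seteqP; split=> [x [_ [[<-]]] | x Wx] //; exists x.
have pdomE : pdom (@Some X) = setT by apply/seteqP.
have pranE : pran (@Some X) = setT by apply/seteqP; split=> // x _; exists x.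
split=> [||x1 x2 y [->] [->] //|W|W]; rewrite ?pdomE ?pranE ?ppreE ?pimgE //.
all: exact: openT.
Qed.

Definition pI_id : pI X := PI id_phomeo.

Definition way_below_covers : Prop :=
  forall s x, pdom s x -> exists2 f, way_below (@pI_le X) f s & pdom f x.

Lemma pI_continuousP : pI_continuous X <-> way_below_covers.
Proof.
split=> [ct s x sx | cov s].
  have [f wfs fx] := is_sup_pdom (ct s).2 sx; by exists f.
split; first split.
- exists (restr s open0); apply: way_below_least => f.
  by apply/pI_leP => x y /restrE [].
- move=> f1 f2 f1s f2s; have f1_le := way_below_le pI_le_refl f1s.
  have f2_le := way_below_le pI_le_refl f2s.
  have oU := openU (pdom_open f1) (pdom_open f2).
  have f1U : pI_le f1 (restr s oU) by apply: pI_le_restr => // x; left.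
  have f2U : pI_le f2 (restr s oU) by apply: pI_le_restr => // x; right.
  exists (restr s oU); split=> //.
  apply: way_below_join f1s f2s _ => [|c f1c f2c]; first exact: pI_le_trans.
  apply/pI_leP => x y /restrE [[f1x | f2x] sx].
  + move/pI_leP: f1c; apply.
    exact: pI_le_agree (pI_le_refl s) f1_le sx f1x.
  + move/pI_leP: f2c; apply.
    exact: pI_le_agree (pI_le_refl s) f2_le sx f2x.
- split=> [f | u ub]; first exact: (way_below_le pI_le_refl).
  apply/pI_leP => x y sx.
  have [f fs fx] := cov s x (ltac:(by rewrite /pdom /= sx)).
  have fs_le := way_below_le pI_le_refl fs.
  move/pI_leP: (ub f fs); apply.
  exact: pI_le_agree (pI_le_refl s) fs_le sx fx.
Qed.

End PartialHomeomorphisms.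

Section Transfer.
Variable X : topologicalType.
Implicit Types (f s : pI X) (C : closed_set X).

Definition dom_compl f : closed_set X := ClosedSet (open_closedC (pdom_open f)).

Definition restr_compl s C : pI X := restr s (closed_openC (@cs_closed X C)).

Lemma dom_compl_le f g : pI_le f g -> closed_le (dom_compl f) (dom_compl g).
Proof. by move=> /pI_le_pdom fg x ngx /fg. Qed.

Lemma restr_compl_le s C C' :
  closed_le C C' -> pI_le (restr_compl s C) (restr_compl s C').
Proof. by move=> CC'; apply: restr_le_restr => x nCx /CC'. Qed.

Lemma is_sup_restr_compl s D S :
  is_sup (@closed_le X) D S ->
  is_sup (@pI_le X) (restr_compl s @` D) (restr_compl s S).
Proof.
move=> supS; split=> [_ [C DC <-] | u ub].
  exact/restr_compl_le/(supS.1 C DC).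
apply/pI_leP => x y /restrE [nSx sx].
have : (~` \bigcap_(C in D) cs_set C) x by rewrite -(is_sup_closedE supS).
rewrite setC_bigcap => -[C DC nCx].
have : (restr_compl s @` D) (restr_compl s C) by exists C.
by move=> /ub /pI_leP; apply; apply/restrE.
Qed.

Lemma way_below_dom_compl s A :
  way_below (@closed_le X) A (dom_compl s) ->
  way_below (@pI_le X) (restr_compl s A) s.
Proof.
move=> As D t dirD supt st.
have sD : closed_le (dom_compl s) (bigcap_closed (dom_compl @` D)).
  move=> x Dx sx; have [d Dd dx] := is_sup_pdom supt (pI_le_pdom st sx).
  have : (dom_compl @` D) (dom_compl d) by exists d.
  by move=> /Dx /(_ dx).
have [_ [[d Dd <-] Ad]] :=
  As _ _ (directed_image dom_compl_le dirD) (is_sup_bigcap _) sD.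
exists d; split=> //; apply/pI_leP => x y /restrE [nAx sx].
apply: pI_le_agree st (supt.1 d Dd) sx _.
by apply: contrapT => ndx; apply/nAx/Ad.
Qed.

Lemma way_below_restr_compl s B f :
  way_below (@pI_le X) f (restr_compl s B) ->
  way_below (@closed_le X) (dom_compl f) B.
Proof.
move=> fsB D S dirD supS BS.
have [_ [[C DC <-] fsC]] := fsB _ _ (directed_image (@restr_compl_le s) dirD)
  (is_sup_restr_compl s supS) (restr_compl_le s BS).
by exists C; split=> // x Cx /(pI_le_pdom fsC) /pdom_restr [/(_ Cx)].
Qed.

End Transfer.

Theorem corollary5p10 (X : topologicalType) :
  core_compact X <-> pI_continuous X.
Proof.
rewrite core_compactP pI_continuousP; split=> [sep s x sx | cov B x nBx].
  have [A As nAx] := sep (dom_compl s) x (fun nsx => nsx sx).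
  exists (restr_compl s A); first exact: way_below_dom_compl.
  exact/pdom_restr.
have Bx : pdom (restr_compl (pI_id X) B) x by apply/pdom_restr.
have [f fB fx] := cov _ x Bx.
by exists (dom_compl f); first exact: way_below_restr_compl fB.
Qed.
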